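(* Let $d\geq 3$, $k\geq 1$ and $2\leq l\leq d$. For every directed plateau polyhypercube $P$ of dimension $d$ and width $k$, the projection of $P$ onto the coordinate plane $(\vec{i_1},\vec{i_l})$ is a directed column-convex polyomino of width $k$.
   Context: Work in $\mathbb{Z}^d$ with orthonormal coordinate system $(0,\vec{i_1},\dots,\vec{i_d})$; a cell is a unit hypercube of the lattice. A polyhypercube of dimension $d$ is a finite union of cells, connected through their $(d-1)$-dimensional faces, defined up to translation. Its width is the number of distinct values of the $\vec{i_1}$-coordinate taken by its cells (so a polyhypercube of width one is called a stratum; the strata of a polyhypercube are its intersections with the layers of constant $\vec{i_1}$-coordinate). A plateau is a stratum that is a hyperrectangle (a box). An elementary step is a positive move of one unit along one axis $\vec{i_j}$, $1\leq j\leq d$. A polyhypercube is directed if there is a distinguished cell (the root) from which every cell can be reached by a path of cells of the polyhypercube using only elementary steps. A directed plateau polyhypercube is a directed polyhypercube all of whose strata are plateaus. The projection onto the plane $(\vec{i_1},\vec{i_l})$ is the set of unit squares $(x_1,x_l)$ such that some cell of the polyhypercube has these $\vec{i_1}$ and $\vec{i_l}$ coordinates; it is a polyomino whose columns correspond to the values of the $\vec{i_1}$-coordinate. A polyomino (finite edge-connected union of unit squares up to translation) is column-convex if its intersection with every column is connected, and directed if every cell can be reached from a root cell by a path of cells using only unit North or East steps; its width is its number of columns and its area its number of cells. *)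

From mathcomp Require Import all_boot all_order all_algebra.
Set Implicit Arguments. Unset Strict Implicit. Unset Printing Implicit Defensive.
Import Order.TTheory GRing.Theory Num.Theory.
Local Open Scope ring_scope.

(* A cell of Z^d is identified with its (lower) corner: a d-tuple of integers.
   Coordinates are 0-based: coordinate 0 is along i_1, coordinate l-1 along i_l. *)
Definition cell (d : nat) := (d.-tuple int)%type.

Definition coord {d} (x : cell d) (i : nat) : int := nth 0 (val x) i.

Definition step {d} (x y : cell d) (j : 'I_d) : bool :=
  (tnth y j == tnth x j + 1) &&
  [forall i : 'I_d, (i != j) ==> (tnth y i == tnth x i)].

Definition estep {d} (x y : cell d) : bool := [exists j : 'I_d, step x y j].

Definition adj {d} (x y : cell d) : bool := estep x y || estep y x.

(* A finite union of cells is represented by a finite sequence of cells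
   (read as a set via membership; defined up to translation is irrelevant
   since all notions below are translation invariant). *)
Definition face_connected {d} (S : seq (cell d)) : Prop :=
  forall x y, x \in S -> y \in S ->
    exists p : seq (cell d),
      [/\ path adj x p, last x p = y & all (fun z => z \in S) p].

Definition polyhypercube {d} (S : seq (cell d)) : Prop :=
  S != [::] /\ face_connected S.

Definition directed {d} (S : seq (cell d)) : Prop :=
  exists2 r, r \in S & forall x, x \in S ->
    exists p : seq (cell d),
      [/\ path estep r p, last r p = x & all (fun z => z \in S) p].

Definition width {d} (S : seq (cell d)) : nat :=
  size (undup [seq coord x 0 | x <- S]).

Definition stratum {d} (S : seq (cell d)) (a : int) : seq (cell d) :=
  [seq x <- S | coord x 0 == a].

Definition is_box {d} (T : seq (cell d)) : Prop :=
  exists lo hi : cell d, forall x : cell d,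
    (x \in T) = [forall i : 'I_d, (tnth lo i <= tnth x i <= tnth hi i)].

Definition plateau_strata {d} (S : seq (cell d)) : Prop :=
  forall a, a \in [seq coord x 0 | x <- S] -> is_box (stratum S a).

Definition directed_plateau_polyhypercube {d} (S : seq (cell d)) : Prop :=
  [/\ polyhypercube S, directed S & plateau_strata S].

(* projection onto the plane (i_1, i_l), with m = l - 1 the 0-based index *)
Definition proj {d} (S : seq (cell d)) (m : nat) : seq (cell 2) :=
  [seq [tuple coord x 0; coord x m] | x <- S].

(* Polyominoes: polyhypercubes of dimension 2 (columns = i_1 coordinate);
   directed in dimension 2 means reachable by East / North unit steps. *)
Definition polyomino (Q : seq (cell 2)) : Prop := polyhypercube Q.

Definition column_convex (Q : seq (cell 2)) : Prop :=
  forall x y z : cell 2, x \in Q -> y \in Q ->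
    coord x 0 = coord y 0 -> coord z 0 = coord x 0 ->
    coord x 1 <= coord z 1 <= coord y 1 -> z \in Q.

From Pilot Require Import Defs.
From mathcomp Require Import all_boot all_order all_algebra.
Import Order.TTheory GRing.Theory Num.Theory.
Set Implicit Arguments. Unset Strict Implicit. Unset Printing Implicit Defensive.

(* Keeping only the coordinates along i_1 and i_l sends every elementary step
   of a cell either to an elementary step of its image or to no move at all.
   Hence paths of cells project to paths of squares, and face-connectedness
   and directedness pass to the projection.  The column of abscissa a of the
   projection is the projection of the stratum at a, which is a box, so it is
   an interval: the projection is column-convex.  Columns correspond to
   strata, so the width is preserved. *)

Definition weak_homo (T U : Type) (f : T -> U) (e : rel T) (e' : rel U) :=
  forall x y, e x y -> f x = f y \/ e' (f x) (f y).

Definition reach (T : eqType) (e : rel T) (S : seq T) (x y : T) : Prop :=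
  exists p : seq T, [/\ path e x p, last x p = y & all (fun z => z \in S) p].

Lemma reach_map (T U : eqType) (f : T -> U) e e' S x y :
  weak_homo f e e' -> reach e S x y -> reach e' (map f S) (f x) (f y).
Proof.
move=> fh [p []]; elim: p x => [|z p IHp] x /=; first by move=> _ <- _; exists [::].
move=> /andP[exz zp] pz /andP[zS pS].
have [q [fzq qz qS]] := IHp z zp pz pS.
case: (fh x z exz) => [->|fxz]; first by exists q.
by exists (f z :: q); rewrite /= fxz map_f.
Qed.

Lemma adj_weak_homo d n (f : cell d -> cell n) :
  weak_homo f estep estep -> weak_homo f adj adj.
Proof.
move=> fh x y /orP[/fh|/fh] [->|e]; rewrite /adj ?e ?orbT; by [left|right].
Qed.

Lemma polyhypercube_map d n (f : cell d -> cell n) S :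
  weak_homo f estep estep -> polyhypercube S -> polyhypercube (map f S).
Proof.
move=> /adj_weak_homo fh [S0 Sconn]; split; first by case: S S0 {Sconn}.
by move=> _ _ /mapP[x xS ->] /mapP[y yS ->]; exact: reach_map fh (Sconn x y xS yS).
Qed.

Lemma directed_map d n (f : cell d -> cell n) S :
  weak_homo f estep estep -> directed S -> directed (map f S).
Proof.
move=> fh [r rS Sdir]; exists (f r); first exact: map_f.
by move=> _ /mapP[x xS ->]; exact: reach_map fh (Sdir x xS).
Qed.

Lemma width_map d n (f : cell d -> cell n) S :
  (forall x, Defs.coord (f x) 0 = Defs.coord x 0) -> width (map f S) = width S.
Proof. by move=> f0; rewrite /width -map_comp (eq_map f0). Qed.

Lemma coordE d (x : cell d) (j : 'I_d) : Defs.coord x j = tnth x j.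
Proof. by rewrite /Defs.coord (tnth_nth 0%R). Qed.

Lemma stepP d (x y : cell d) j :
  reflect (forall i, tnth y i = tnth x i + (i == j)%:R)%R (step x y j).
Proof.
apply: (iffP andP) => [[/eqP yj /forallP yi] i | yx].
  have [->|ij] := eqVneq i j; first by rewrite yj.
  by rewrite (eqP (implyP (yi i) ij)) addr0.
split; first by rewrite yx eqxx.
by apply/forallP => i; apply/implyP => ij; rewrite yx (negbTE ij) addr0.
Qed.

Definition project n d (sel : 'I_n -> 'I_d) (x : cell d) : cell n :=
  [tuple tnth x (sel i) | i < n].

Lemma estep_project n d (sel : 'I_n -> 'I_d) :
  injective sel -> weak_homo (project sel) estep estep.
Proof.
move=> sel_inj x y /existsP[j /stepP yx].
case: (pickP (fun i => sel i == j)) => [i /eqP selij | selj].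
  right; apply/existsP; exists i; apply/stepP => i'.
  by rewrite !tnth_mktuple yx -selij (inj_eq sel_inj).
by left; apply: eq_from_tnth => i; rewrite !tnth_mktuple yx selj addr0.
Qed.

Definition set_tnth d (x : cell d) (j : 'I_d) (c : int) : cell d :=
  [tuple if i == j then c else tnth x i | i < d].

Lemma box_set_tnth d (T : seq (cell d)) x y j c :
  is_box T -> x \in T -> y \in T -> (tnth x j <= c <= tnth y j)%R ->
  set_tnth x j c \in T.
Proof.
move=> [lo [hi T_box]]; rewrite !T_box => /forallP xT /forallP yT /andP[xc cy].
apply/forallP => i; rewrite tnth_mktuple; case: eqP => [->|_]; last exact: xT.
have /andP[lox _] := xT j; have /andP[_ yhi] := yT j.
by rewrite (le_trans lox xc) (le_trans cy yhi).
Qed.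

Lemma ord2_cases (i : 'I_2) : i = ord0 \/ i = ord_max.
Proof. by case: i => [[|[|//]] i2]; [left | right]; apply: val_inj. Qed.

Section PlaneProjection.

Variables (d m : nat) (m_gt0 : 0 < m) (m_lt_d : m < d).

Lemma plane_axis_subproof (i : 'I_2) : i * m < d.
Proof.
apply: leq_ltn_trans m_lt_d; rewrite -[leqRHS]mul1n leq_mul2r.
by rewrite -ltnS ltn_ord orbT.
Qed.

(* Axis [i * m]: the i_1 axis for [i = 0], the i_l axis (m = l - 1) for [i = 1]. *)
Definition plane_axis (i : 'I_2) : 'I_d := Ordinal (plane_axis_subproof i).

Lemma plane_axis_inj : injective plane_axis.
Proof.
move=> i i' /(congr1 val) /eqP /=; rewrite eqn_mul2r eqn0Ngt m_gt0 => /eqP.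
exact: val_inj.
Qed.

Lemma proj_project (S : seq (cell d)) : proj S m = map (project plane_axis) S.
Proof.
apply: eq_map => x; apply: eq_from_tnth => i.
by rewrite tnth_mktuple -(coordE x); case: (ord2_cases i) => ->; rewrite /= ?mul1n.
Qed.

Lemma column_convex_proj (S : seq (cell d)) :
  plateau_strata S -> column_convex (proj S m).
Proof.
move=> Splat; rewrite proj_project => _ _ z /mapP[x xS ->] /mapP[y yS ->].
rewrite !(coordE _ ord0) !(coordE _ ord_max) !tnth_mktuple => xy0 zx0 xzy.
set a := Defs.coord x 0.
have a_col : a \in [seq Defs.coord x 0 | x <- S] by exact: map_f.
have xa : x \in stratum S a by rewrite mem_filter eqxx xS.
have ya : y \in stratum S a.
  by rewrite mem_filter /a !(coordE _ (plane_axis ord0)) xy0 eqxx.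
have := box_set_tnth (Splat a a_col) xa ya xzy; rewrite mem_filter => /andP[_ wS].
suff <- : project plane_axis (set_tnth x (plane_axis ord_max) (tnth z ord_max)) = z.
  exact: map_f.
apply: eq_from_tnth => i; rewrite !tnth_mktuple (inj_eq plane_axis_inj).
by case: (ord2_cases i) => ->.
Qed.

Lemma coord_project0 (x : cell d) :
  Defs.coord (project plane_axis x) 0 = Defs.coord x 0.
Proof. by rewrite (coordE _ ord0) tnth_mktuple -coordE. Qed.

End PlaneProjection.

Theorem theorem1 (d k l : nat) (hd : 3 <= d) (hk : 1 <= k)
  (hl1 : 2 <= l) (hl2 : l <= d) (P : seq (cell d)) :
  directed_plateau_polyhypercube P -> width P = k ->
  [/\ polyomino (proj P l.-1), directed (proj P l.-1),
      column_convex (proj P l.-1) & width (proj P l.-1) = k].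
Proof.
move=> [Ppoly Pdir Pplat] <-.
have m_gt0 : 0 < l.-1 by case: l hl1 {hl2} => [|[|l']].
have m_lt_d : l.-1 < d by case: l hl1 hl2 {m_gt0} => [|l'].
have pr_estep := estep_project (@plane_axis_inj _ _ m_gt0 m_lt_d).
have := column_convex_proj m_gt0 m_lt_d Pplat.
rewrite (proj_project m_lt_d) => Pconv; split=> //.
- exact: polyhypercube_map.
- exact: directed_map.
- exact/width_map/coord_project0.
Qed.
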